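(* Let $q$ be a prime power, $d\ge5$, $\mathcal C$ the $[q+1,q+2-d,d]_q$ normalized GDRS code, and $\mathcal V^{(2)}$ a coset of weight $2$ of $\mathcal C$ with leader $\mathbf v_2(j_1,j_2;\gamma_1,\gamma_2)$. Let $\beta$ be a primitive element of $\mathbb F_q$, $\gamma=-\gamma_2/\gamma_1$, and $\lambda(\gamma)\in\mathbb Z_{q-1}$ with $\beta^{\lambda(\gamma)}=\gamma$. Write $P=\mathrm P^+_{q-1,d-2}(\lambda(\gamma))$ (with $t$ an integer). Then: (1) $q=3t+1\ge7$, $d=5$: $P=\frac13\left(\binom{q-2}{2}-1\right)+1$ if $\lambda(\gamma)\equiv0\pmod3$, else $P=\frac13\left(\binom{q-2}{2}-1\right)$. (2) $q=4t+3\ge7$, $d=6$: $P=\frac14\left(\binom{q-2}{3}+\frac{q-3}{2}\right)$ if $\lambda(\gamma)\equiv0\pmod2$, else $P=\frac14\left(\binom{q-2}{3}-\frac{q-3}{2}\right)$. (3) $q=5t+1\ge11$, $d=7$: $P=\frac15\left(\binom{q-2}{4}-1\right)+1$ if $\lambda(\gamma)\equiv0\pmod5$, else $P=\frac15\left(\binom{q-2}{4}-1\right)$. (4) $q=6t+3\ge9$ or $q=6t+5\ge11$, $d=8$: $P=\frac16\left(\binom{q-2}{5}-\binom{(q-3)/2}{2}\right)$ if $\lambda(\gamma)\equiv0\pmod2$, else $P=\frac16\left(\binom{q-2}{5}+\binom{(q-3)/2}{2}\right)$. (5) $q=6t+4\ge10$, $d=8$: $P=\frac13\left(\frac12\binom{q-2}{5}+\frac{q-4}{3}\right)$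 if $\lambda(\gamma)\equiv0\pmod3$, else $P=\frac16\left(\binom{q-2}{5}-\frac{q-4}{3}\right)$. (6) $q=7t+1\ge29$, $d=9$: $P=\frac17\left(\binom{q-2}{6}-1\right)+1$ if $\lambda(\gamma)\equiv0\pmod7$, else $P=\frac17\left(\binom{q-2}{6}-1\right)$. (7) $q=4t+7\ge11$, $d=10$: $P=\frac18\left(\binom{q-2}{7}+\binom{(q-3)/2}{3}\right)$ if $\lambda(\gamma)\equiv0\pmod2$, else $P=\frac18\left(\binom{q-2}{7}-\binom{(q-3)/2}{3}\right)$. (8) $q=9t+4\ge13$ or $q=9t+7\ge16$, $d=11$: $P=\frac19\left(\binom{q-2}{8}+2\binom{(q-4)/3}{2}\right)$ if $\lambda(\gamma)\equiv0\pmod3$, else $P=\frac19\left(\binom{q-2}{8}-\binom{(q-4)/3}{2}\right)$. (9) $q=4t+1\ge9$, $d=6$: $P=\frac14\left(\binom{q-2}{3}+\frac{q-7}{2}\right)$ if $\lambda(\gamma)\equiv0\pmod4$; $P=\frac14\left(\binom{q-2}{3}-\frac{q-3}{2}\right)$ if $\lambda(\gamma)\equiv1\pmod2$; $P=\frac14\left(\binom{q-2}{3}+\frac{q+1}{2}\right)$ if $\lambda(\gamma)\equiv2\pmod4$.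
   Context: Normalized GDRS code: the $\mathbb F_q$-linear code of length $q+1$ which is the kernel of the $(d-1)\times(q+1)$ matrix whose first $q$ columns are $(1,m,\dots,m^{d-2})^T$, $m$ running over $\mathbb F_q$, and whose last column is $(0,\dots,0,1)^T$. A coset of weight $2$ is a coset of minimum Hamming weight $2$; $\mathbf v_2(j_1,j_2;\gamma_1,\gamma_2)$ is the vector with $\gamma_1,\gamma_2\in\mathbb F_q^*$ in positions $j_1\ne j_2$ and zeros elsewhere. For positive integers $\mu<R$ and $\lambda\in\mathbb Z_R$ (integers mod $R$), $\mathrm P^+_{R,\mu}(\lambda)$ is the number of $\mu$-element subsets of $\mathbb Z_R$ (distinct elements) whose sum in $\mathbb Z_R$ is $\lambda$. (By the paper's results, $P$ equals the number of weight-$(d-2)$ vectors in $\mathcal V^{(2)}$.) *)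

From HB Require Import structures.
From mathcomp Require Import all_boot all_order all_algebra.
Set Implicit Arguments. Unset Strict Implicit. Unset Printing Implicit Defensive.
Import GRing.Theory.
Local Open Scope ring_scope.

(* Positions of the length-(q+1) code: [Some m] for m in F (first q columns),
   [None] for the last column (0,...,0,1)^T. *)
Notation vecF F := {ffun option F -> F}.

(* The normalized GDRS code: kernel of the (d-1) x (q+1) parity-check matrix
   with columns (1,m,...,m^(d-2))^T (m in F) and (0,...,0,1)^T. *)
Definition in_gdrs (F : finFieldType) (d : nat) (c : vecF F) : Prop :=
  forall i : 'I_d.-1,
    \sum_(m : F) c (Some m) * m ^+ i + (if val i == d.-2 then c None else 0) = 0.

Definition wt (F : finFieldType) (v : vecF F) : nat := #|[set x | v x != 0]|.

Definition v2 (F : finFieldType) (j1 j2 : option F) (g1 g2 : F) : vecF F :=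
  [ffun x => if x == j1 then g1 else if x == j2 then g2 else 0].

Definition coset_weight (F : finFieldType) (d : nat) (v : vecF F) (w : nat) : Prop :=
  (exists2 c, in_gdrs d c & wt (v + c)%R = w) /\
  (forall c, in_gdrs d c -> (w <= wt (v + c)%R)%N).

Definition Pplus (R mu lam : nat) : nat :=
  #|[set S : {set 'I_R} | (#|S| == mu) && ((\sum_(i in S) val i) %% R == lam %% R)%N]|.

(* Let N(a) be the number of k-subsets of Z_R with sum a. Translating a subset by t adds
   k t to its sum, so N(a) only depends on a modulo g = gcd(k, R). Cut Z_R into R/g
   columns of g consecutive residues and count subsets by their sum modulo g. Rotating
   the first column that a subset meets in c elements, 0 < c < g, by u adds c u to the
   sum; when g is prime this equidistributes such subsets over the residues mod g. The
   other subsets are unions of m = k/g full columns: there are C(R/g, m) of them, all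
   with sum C(g, 2) m mod g. Hence
     R N(a) + C(R/g, m) = C(R, k) + g [C(g, 2) m = a mod g] C(R/g, m),
   which gives cases (1)-(8) with R = q - 1 and k = d - 2. In case (9) g = 4 is not
   prime: the rotations only give invariance under adding 2, and the missing relation
   comes from counting modulo the prime 2. *)

From HB Require Import structures.
From mathcomp Require Import all_boot all_order all_algebra.
From mathcomp Require Import zify ring lra.
Set Implicit Arguments. Unset Strict Implicit. Unset Printing Implicit Defensive.
Import GRing.Theory Num.Theory.
Local Open Scope ring_scope.

Lemma imset_bij (A B : finType) (f : A -> B) :
  bijective f -> bijective (fun S : {set A} => f @: S).
Proof.
case=> g fK gK; exists (fun T : {set B} => g @: T) => S;
  by rewrite -imset_comp (@eq_imset _ _ _ id) ?imset_id.
Qed.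

Lemma card_preimset_bij (A B : finType) (f : A -> B) (P : pred B) :
  bijective f -> #|[set x | P (f x)]| = #|[set y | P y]|.
Proof.
move=> bij_f; rewrite -(on_card_preimset (onW_bij _ bij_f)).
by apply: eq_card => x; rewrite !inE.
Qed.

Lemma val_Zp_sum p (I : finType) (P : pred I) (F : I -> 'I_p.+1) :
  val (\sum_(i | P i) F i) = ((\sum_(i | P i) val (F i)) %% p.+1)%N.
Proof.
apply: (big_rec2 (fun (x : 'I_p.+1) n => val x = n %% p.+1)%N); first by rewrite mod0n.
by move=> i x n _ /= ->; rewrite modnDmr.
Qed.

Section SubsetSums.
Variable V : finZmodType.

Definition card_subsets_sum (k : nat) (a : V) : nat :=
  #|[set S : {set V} | (#|S| == k) && (\sum_(x in S) x == a)]|.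

Lemma card_subsets_sum_shift k a t :
  card_subsets_sum k (a + t *+ k) = card_subsets_sum k a.
Proof.
have bij_t : bijective (+%R^~ t : V -> V) by exists (+%R^~ (- t)) => x; rewrite ?addrK ?subrK.
rewrite /card_subsets_sum -(card_preimset_bij _ (imset_bij bij_t)).
apply: eq_card => S; rewrite !inE card_imset; last exact: addIr.
rewrite big_imset /=; last by move=> x y _ _; apply: addIr.
rewrite big_split sumr_const /=; case: eqP => // ->.
by rewrite (inj_eq (addIr _)).
Qed.

End SubsetSums.

Lemma Zp_mod_gcd_shift R k (a b : 'I_R.+2) :
  a = b %[mod gcdn k R.+2] -> exists t : 'I_R.+2, b = a + t *+ k.
Proof.
set g := gcdn k R.+2 => eq_ab.
have [x _ dvd_gx] := @Bezoutl R.+2 k isT.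
have gx : (g%:R : 'I_R.+2) = - (x * k)%:R.
  apply/eqP; rewrite -addr_eq0 -natrD; apply/eqP/val_inj.
  by rewrite /= Zp_nat /= /g gcdnC; apply/eqP.
set c := val (b - a).
have bac : b = a + c%:R by rewrite natr_Zp addrC subrK.
have dvd_gc : (g %| c)%N.
  have : (a + c = b %[mod g])%N.
    by rewrite -(modn_dvdm _ (dvdn_gcdr k R.+2)) [in RHS]bac /= natr_Zp.
  by rewrite -eq_ab -[X in _ = X %[mod g]]addn0 => /eqP; rewrite eqn_modDl mod0n.
exists (- ((c %/ g)%:R * x%:R)); rewrite {1}bac; congr (_ + _).
by rewrite -mulr_natr -{1}(divnK dvd_gc) natrM gx; ring.
Qed.

Lemma Pplus_card_subsets_sum R k lam :
  Pplus R.+1 k lam = card_subsets_sum k (inZp lam : 'I_R.+1).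
Proof.
apply: eq_card => S; rewrite !inE; congr (_ && _).
by rewrite -(inj_eq val_inj) val_Zp_sum.
Qed.

Lemma Pplus_mod R k a b :
  (0 < R)%N -> a = b %[mod gcdn k R] -> Pplus R k a = Pplus R k b.
Proof.
case: R => [//|[|R] _ eq_ab]; first by rewrite /Pplus !modn1.
rewrite !Pplus_card_subsets_sum.
have [|t ->] := @Zp_mod_gcd_shift R k (inZp a) (inZp b); last by rewrite card_subsets_sum_shift.
by rewrite /= !(modn_dvdm _ (dvdn_gcdr _ _)).
Qed.

Section Grid.
Variables (I : finType) (Z : finZmodType).
Implicit Types (S : {set I * Z}) (j : I) (u d r : Z) (k m : nat).

Definition col_card j S : nat := #|[set y in S | y.1 == j]|.

Definition grid_sum S : Z := \sum_(y in S) y.2.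

Definition col_rot j u (y : I * Z) : I * Z := if y.1 == j then (y.1, y.2 + u) else y.

Definition grid_partial S : bool := [exists j, 0 < col_card j S < #|Z|]%N.

Definition card_grid_sum k r : nat :=
  #|[set S : {set I * Z} | (#|S| == k) && (grid_sum S == r)]|.

Definition card_partial_sum k r : nat :=
  #|[set S : {set I * Z} | [&& #|S| == k, grid_partial S & grid_sum S == r]]|.

Definition card_full_sum k r : nat :=
  #|[set S : {set I * Z} | [&& #|S| == k, ~~ grid_partial S & grid_sum S == r]]|.

Lemma col_rot_inj j u : injective (col_rot j u).
Proof.
apply: (can_inj (g := col_rot j (- u))) => -[a b]; rewrite /col_rot /=.
by case: (a =P j) => [->|/eqP/negbTE aj]; rewrite /= ?eqxx ?addrK ?aj.
Qed.

Lemma col_rot1 j u y : (col_rot j u y).1 = y.1.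
Proof. by rewrite /col_rot; case: ifP. Qed.

Lemma col_card_rot i j u S : col_card i (col_rot j u @: S) = col_card i S.
Proof.
rewrite /col_card -[RHS](card_imset _ (@col_rot_inj j u)); apply: eq_card => y.
rewrite !inE; apply/andP/imsetP.
  case=> /imsetP [x xS ->]; rewrite col_rot1 => xi.
  by exists x; rewrite // inE xS.
by case=> x; rewrite inE => /andP [xS xi] ->; rewrite imset_f // col_rot1.
Qed.

Lemma grid_sum_rot j u S :
  grid_sum (col_rot j u @: S) = grid_sum S + u *+ col_card j S.
Proof.
rewrite /grid_sum big_imset /=; last by move=> x y _ _; apply: col_rot_inj.
rewrite (bigID (fun y => y.1 == j)) [in RHS](bigID (fun y => y.1 == j)) /=.
rewrite [RHS]addrAC; congr (_ + _); last first.
  by apply: eq_bigr => y /andP [_ /negbTE yj]; rewrite /col_rot yj.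
rewrite (eq_bigr (fun y => y.2 + u)) => [|y /andP [_ yj]]; last by rewrite /col_rot yj.
rewrite big_split /col_card -sumr_const; congr (_ + _).
by apply: eq_bigl => y; rewrite !inE.
Qed.

Definition rot_first_partial (uf : nat -> Z) S : {set I * Z} :=
  if [pick j | 0 < col_card j S < #|Z|]%N is Some j
  then col_rot j (uf (col_card j S)) @: S else S.

Lemma col_card_rot_first_partial uf j S :
  col_card j (rot_first_partial uf S) = col_card j S.
Proof. by rewrite /rot_first_partial; case: pickP => // i _; rewrite col_card_rot. Qed.

Lemma rot_first_partial_inj uf : {in grid_partial &, injective (rot_first_partial uf)}.
Proof.
move=> S1 S2 _ /existsP [j2 j2P] eqS.
have eq_col j : col_card j S1 = col_card j S2.
  by rewrite -(col_card_rot_first_partial uf j S1) eqS col_card_rot_first_partial.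
move: eqS; rewrite /rot_first_partial (eq_pick (Q := fun j => 0 < col_card j S2 < #|Z|)%N);
  last by move=> j; rewrite eq_col.
case: pickP => [j _|/(_ j2)]; last by rewrite j2P.
by rewrite eq_col => /imset_inj; apply; apply: col_rot_inj.
Qed.

Lemma card_partial_sum_le k r d (uf : nat -> Z) :
    (forall c, 0 < c < #|Z| -> uf c *+ c = d)%N ->
  (card_partial_sum k r <= card_partial_sum k (r + d)%R)%N.
Proof.
move=> ud; rewrite /card_partial_sum -(card_in_imset (f := rot_first_partial uf)).
  apply/subset_leq_card/subsetP => _ /imsetP [S + ->]; rewrite !inE.
  case/and3P=> /eqP <- Spartial /eqP <-.
  case/existsP: (Spartial) => j0 j0P; apply/and3P; split.
  - rewrite /rot_first_partial; case: pickP => // j _; rewrite card_imset //.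
    exact: col_rot_inj.
  - by apply/existsP; exists j0; rewrite col_card_rot_first_partial.
  rewrite /rot_first_partial; case: pickP => [j jP|/(_ j0)]; last by rewrite j0P.
  by rewrite grid_sum_rot ud.
move=> S1 S2; rewrite !inE => /and3P [_ S1p _] /and3P [_ S2p _].
exact: rot_first_partial_inj.
Qed.

Lemma card_partial_sum_shift k r d :
    (forall c, 0 < c < #|Z| -> exists u, u *+ c = d)%N ->
  card_partial_sum k (r + d) = card_partial_sum k r.
Proof.
move=> ud; pose uf c := odflt 0 [pick u | u *+ c == d].
have uP c : (0 < c < #|Z|)%N -> uf c *+ c = d.
  move=> /ud [v vd]; rewrite /uf; case: pickP => [w /eqP //|/(_ v)].
  by rewrite vd eqxx.
apply/eqP; rewrite eqn_leq (card_partial_sum_le _ _ uP) andbT.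
rewrite -{2}(addrK d r); apply: (@card_partial_sum_le _ _ _ (fun c => - uf c)) => c cP.
by rewrite mulNrn uP.
Qed.

Lemma card_grid_sum_split k r :
  card_grid_sum k r = (card_partial_sum k r + card_full_sum k r)%N.
Proof.
rewrite /card_grid_sum /card_partial_sum /card_full_sum -(cardsID [set S | grid_partial S]).
congr (_ + _)%N; apply: eq_card => S; rewrite !inE;
  by case: (grid_partial S); rewrite ?andbT ?andbF.
Qed.

Lemma col_card_setX (T : {set I}) j : col_card j (setX T setT) = ((j \in T) * #|Z|)%N.
Proof.
rewrite /col_card -[#|Z|]mul1n -(cards1 j) -cardsT -cardsX.
case: (boolP (j \in T)) => [jT|jNT]; rewrite ?mul0n; last first.
  apply/eqP; rewrite cards_eq0; apply/eqP/setP => -[a b].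
  by rewrite !inE andbT /=; apply/andP => -[aT /eqP aj]; rewrite -aj aT in jNT.
rewrite mul1n; apply: eq_card => -[a b]; rewrite !inE /= !andbT.
by case: eqP => [->|]; rewrite ?jT ?andbF.
Qed.

Lemma grid_sum_setX (T : {set I}) :
  grid_sum (setX T setT) = (\sum_(z : Z) z) *+ #|T|.
Proof.
rewrite /grid_sum -sumr_const pair_big_dep /=.
by apply: eq_bigl => -[j i]; rewrite !inE andbT.
Qed.

Lemma setX_full_inj : injective (fun T : {set I} => setX T [set: Z]).
Proof.
move=> T1 T2 eqT; apply/setP => j.
by have /setP/(_ (j, 0)) := eqT; rewrite !inE !andbT.
Qed.

Lemma not_partial_setX S :
  ~~ grid_partial S -> S = setX [set j | col_card j S != 0%N] setT.
Proof.
move=> /existsPn Sfull; apply/setP => -[j i]; rewrite !inE andbT /=.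
apply/idP/idP => [yS|].
  by rewrite -lt0n card_gt0; apply/set0Pn; exists (j, i); rewrite !inE yS /=.
have col_sub : [set y in S | y.1 == j] \subset setX [set j] [set: Z].
  by apply/subsetP => -[a b]; rewrite !inE /= => /andP [_ ->].
rewrite -lt0n => col_gt0; have := Sfull j; rewrite col_gt0 -leqNgt => col_ge.
have /eqP col_eq : [set y in S | y.1 == j] == setX [set j] [set: Z].
  by rewrite eqEcard col_sub cardsX cards1 cardsT mul1n col_ge.
have : (j, i) \in setX [set j] [set: Z] by rewrite !inE eqxx.
by rewrite -col_eq inE => /andP [].
Qed.

Lemma card_full_sum_eq k m r : k = (m * #|Z|)%N ->
  card_full_sum k r = (((\sum_(z : Z) z) *+ m == r) * 'C(#|I|, m))%N.
Proof.
move=> km; pose full (T : {set I}) := setX T [set: Z]; rewrite /card_full_sum.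
have -> : [set S : {set I * Z} | [&& #|S| == k, ~~ grid_partial S & grid_sum S == r]] =
    full @: [set T : {set I} | (#|T| == m) && ((\sum_(z : Z) z) *+ m == r)].
  apply/setP => S; rewrite inE; apply/and3P/imsetP => [[/eqP cardS SNp /eqP <-]|].
    have defS := not_partial_setX SNp; set T := [set j | _] in defS.
    have cardT : #|T| = m.
      apply/eqP; rewrite -(@eqn_pmul2r #|Z|); last by apply/card_gt0P; exists 0.
      by rewrite -km -cardS defS cardsX cardsT.
    by exists T; rewrite // inE cardT eqxx defS grid_sum_setX cardT /=.
  case=> T; rewrite inE => /andP [/eqP cardT /eqP sumT] ->.
  rewrite /full cardsX cardsT cardT km grid_sum_setX cardT sumT; split=> //.
  by apply/existsPn => j; rewrite col_card_setX; case: (j \in T); rewrite ?mul1n ?ltnn ?andbF.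
rewrite (card_imset _ setX_full_inj).
case: eqP => _; last by apply: eq_card0 => T; rewrite !inE andbF.
by rewrite mul1n -card_draws; apply: eq_card => T; rewrite !inE andbT.
Qed.

Lemma sum_card_grid_sum k : (\sum_r card_grid_sum k r)%N = 'C(#|I| * #|Z|, k).
Proof.
rewrite -card_prod -card_draws -sum1dep_card.
rewrite (partition_big grid_sum xpredT) //=; apply: eq_bigr => r _.
by rewrite sum1dep_card; apply: eq_card => S; rewrite !inE.
Qed.

Lemma card_grid_sum_uniform k m r :
    (forall c d, 0 < c < #|Z| -> exists u, u *+ c = d)%N -> k = (m * #|Z|)%N ->
  (#|Z| * card_grid_sum k r + 'C(#|I|, m) =
   'C(#|I| * #|Z|, k) + #|Z| * (((\sum_(z : Z) z) *+ m == r) * 'C(#|I|, m)))%N.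
Proof.
move=> Zdiv km; set s := (\sum_(z : Z) z) *+ m.
have grid_eq r' : card_grid_sum k r' = (card_partial_sum k 0%R + (s == r') * 'C(#|I|, m))%N.
  rewrite card_grid_sum_split (card_full_sum_eq _ km) -{1}[r']add0r.
  by rewrite card_partial_sum_shift // => c /Zdiv.
have sum_ind : (\sum_(r' : Z) (s == r') * 'C(#|I|, m))%N = 'C(#|I|, m).
  rewrite (bigD1 s) //= eqxx mul1n big1 ?addn0 // => r' /negbTE.
  by rewrite eq_sym => ->.
rewrite -sum_card_grid_sum (eq_bigr _ (fun r' _ => grid_eq r')) big_split /= sum_ind.
by rewrite sum_nat_const grid_eq (_ : #|xpredT| = #|Z|) // mulnDr addnAC.
Qed.

End Grid.

Lemma grid_index_subproof n g (y : 'I_n * 'I_g) : (y.1 * g + y.2 < n * g)%N.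
Proof. by case: y => [[j lt_jn] [i lt_ig]] /=; nia. Qed.

Definition grid_index n g (y : 'I_n * 'I_g) : 'I_(n * g) :=
  Ordinal (grid_index_subproof y).

Lemma grid_index_mod n g (y : 'I_n * 'I_g) : (grid_index y %% g)%N = y.2.
Proof. by rewrite /= modnMDl modn_small. Qed.

Lemma grid_index_bij n g : bijective (@grid_index n g).
Proof.
apply: inj_card_bij; last by rewrite card_prod !card_ord.
move=> [[j1 lt_j1] [i1 lt_i1]] [[j2 lt_j2] [i2 lt_i2]] /(congr1 val) /= eq12.
have g_gt0 : (0 < g)%N by apply: leq_ltn_trans lt_i1.
have := congr1 (modn^~ g) eq12; rewrite !modnMDl !modn_small // => eq_i.
have := congr1 (divn^~ g) eq12; rewrite !divnMDl // !divn_small // !addn0 => eq_j.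
by congr (_, _); apply/val_inj.
Qed.

Lemma card_ord_modn R g r : (g %| R)%N -> (r < g)%N ->
  #|[set s : 'I_R | s %% g == r]%N| = (R %/ g)%N.
Proof.
case/dvdnP=> n -> lt_rg; rewrite mulnK ?(leq_ltn_trans _ lt_rg) //.
rewrite -(card_preimset_bij _ (grid_index_bij n g)).
have -> : [set y | grid_index y %% g == r]%N = setX [set: 'I_n] [set Ordinal lt_rg].
  by apply/setP => y; rewrite !inE grid_index_mod -(inj_eq val_inj).
by rewrite cardsX cardsT cards1 card_ord muln1.
Qed.

Definition card_subsets_summod (R k g r : nat) : nat :=
  #|[set S : {set 'I_R} | (#|S| == k) && ((\sum_(x in S) val x) %% g == r)%N]|.

Lemma card_subsets_summod_grid n g k (r : 'I_g.+1) :
  card_subsets_summod (n * g.+1) k g.+1 r = card_grid_sum 'I_n k r.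
Proof.
have index_inj := bij_inj (grid_index_bij n g.+1).
rewrite /card_subsets_summod -(card_preimset_bij _ (imset_bij (grid_index_bij n g.+1))).
apply: eq_card => S; rewrite !inE (card_imset _ index_inj).
congr (_ && _); rewrite big_imset /=; last by move=> y1 y2 _ _; apply: index_inj.
rewrite -modn_summ (eq_bigr (fun y => val y.2)) => [|y _]; last by rewrite grid_index_mod.
by rewrite /grid_sum -val_Zp_sum (inj_eq val_inj).
Qed.

Lemma card_subsets_summod_gcd R k lam : (0 < R)%N ->
  card_subsets_summod R k (gcdn k R) (lam %% gcdn k R)%N = (R %/ gcdn k R * Pplus R k lam)%N.
Proof.
move=> R_gt0; set g := gcdn k R; have dvd_gR : (g %| R)%N := dvdn_gcdr k R.
pose sum_mod (S : {set 'I_R}) := Ordinal (ltn_pmod (\sum_(x in S) val x) R_gt0).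
rewrite /card_subsets_summod -sum1dep_card.
rewrite (partition_big sum_mod (fun s : 'I_R => s %% g == lam %% g)%N) => [|S]; last first.
  by case/andP=> _; rewrite /= (modn_dvdm _ dvd_gR).
rewrite (eq_bigr (fun=> Pplus R k lam)) => [|s /eqP s_lam].
  rewrite sum_nat_const -(card_ord_modn dvd_gR (ltn_pmod lam _)) ?gcdn_gt0 ?R_gt0 ?orbT //.
  by congr (_ * _)%N; apply: eq_card => s; rewrite inE.
rewrite -(Pplus_mod R_gt0 s_lam) sum1dep_card; apply: eq_card => S; rewrite !inE.
rewrite -(inj_eq val_inj) /= (modn_small (ltn_ord s)) -andbA; congr (_ && _).
apply/andP/idP => [[] //|sum_s]; split=> //.
by rewrite -(modn_dvdm _ dvd_gR) (eqP sum_s) s_lam.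
Qed.

Lemma Zp_mulrn_onto p c (d : 'I_p.+2) :
  prime p.+2 -> (0 < c < p.+2)%N -> exists u : 'I_p.+2, u *+ c = d.
Proof.
move=> p_pr /andP [c_gt0 lt_cp]; exists (d / c%:R); rewrite -[_ *+ c]mulr_natr divrK //.
by rewrite (@unitZpE p.+2) // prime_coprime // gtnNdvd.
Qed.

Lemma val_Zp_sum_ord g : val (\sum_(i : 'I_g.+1) i) = ('C(g.+1, 2) %% g.+1)%N.
Proof. by rewrite val_Zp_sum -bin2_sum big_mkord. Qed.

Lemma card_subsets_summod_prime R k g m r :
    prime g -> (g %| R)%N -> k = (m * g)%N -> (r < g)%N ->
  (g * card_subsets_summod R k g r + 'C(R %/ g, m) =
   'C(R, k) + g * (('C(g, 2) * m == r %[mod g]) * 'C(R %/ g, m)))%N.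
Proof.
move=> g_pr /dvdnP [n ->] km lt_rg; rewrite mulnK ?prime_gt0 //.
case: g g_pr km lt_rg => [|[|g]] // g_pr km lt_rg.
rewrite -[r]/(val (Ordinal lt_rg)) card_subsets_summod_grid.
rewrite -(card_ord g.+2) in km.
have := card_grid_sum_uniform 'I_n (Ordinal lt_rg) _ km; rewrite !card_ord => ->.
  by rewrite -(inj_eq val_inj) /= Zp_mulrn /= val_Zp_sum_ord modnMml (modn_small lt_rg).
by move=> c d; apply: Zp_mulrn_onto.
Qed.

Lemma Pplus_prime_gcd R k g m lam :
    (0 < R)%N -> prime g -> gcdn k R = g -> k = (m * g)%N -> (0 < m)%N ->
  (Pplus R k lam)%:R =
    ('C(R.-1, k.-1))%:R / k%:R - ('C((R %/ g).-1, m.-1))%:R / k%:R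
    + (('C(g, 2) * m == lam %[mod g])%N : nat)%:R * ('C((R %/ g).-1, m.-1))%:R / m%:R
  :> rat.
Proof.
move=> R_gt0 g_pr gcd_kR km m_gt0; set n := (R %/ g)%N.
have dvd_gR : (g %| R)%N by rewrite -gcd_kR dvdn_gcdr.
have defR : R = (n * g)%N by rewrite divnK.
have n_gt0 : (0 < n)%N by rewrite divn_gt0 ?prime_gt0 // dvdn_leq.
have k_gt0 : (0 < k)%N by rewrite km muln_gt0 m_gt0 prime_gt0.
have count := card_subsets_summod_prime g_pr dvd_gR km (ltn_pmod lam (prime_gt0 g_pr)).
rewrite -gcd_kR card_subsets_summod_gcd // gcd_kR modn_mod -/n in count.
have binR := mul_bin_diag R k.-1; rewrite prednK // in binR.
have binn := mul_bin_diag n m.-1; rewrite prednK // in binn.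
move: count binR binn; set P := Pplus R k lam; set CRk := 'C(R, k).
set A := 'C(R.-1, k.-1); set Cnm := 'C(n, m); set B := 'C(n.-1, m.-1).
set c := (_ == _ %[mod g])%N; clearbody n P CRk A Cnm B c => count binR binn.
rewrite defR km in binR; rewrite km.
have toQ := congr1 (fun x : nat => x%:R : rat).
move/toQ: count; move/toQ: binR; move/toQ: binn; rewrite /= !(natrD, natrM).
have [nz_n nz_g nz_m] : [/\ (n%:R : rat) != 0, (g%:R : rat) != 0 & (m%:R : rat) != 0].
  by rewrite !pnatr_eq0 -!lt0n n_gt0 m_gt0 prime_gt0.
move=> binn binR count.
have -> : P%:R = (CRk%:R + g%:R * (c%:R * Cnm%:R) - Cnm%:R) / (g%:R * n%:R) :> rat.
  by rewrite -count; field; exact/andP.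
have -> : CRk%:R = n%:R * g%:R * A%:R / (m%:R * g%:R) :> rat.
  by rewrite binR; field; exact/andP.
have -> : Cnm%:R = n%:R * B%:R / m%:R :> rat by rewrite binn; field.
by field; rewrite nz_n nz_g nz_m.
Qed.

Lemma card_subsets_summod2E R k r : (r < 2)%N ->
  card_subsets_summod R k 2 r =
  (card_subsets_summod R k 4 r + card_subsets_summod R k 4 (r + 2))%N.
Proof.
move=> lt_r2; rewrite /card_subsets_summod.
rewrite -(cardsID [set S : {set 'I_R} | (\sum_(x in S) val x) %% 4 == r]%N).
congr (_ + _)%N; apply: eq_card => S; rewrite !inE;
  case: (#|S| == k); rewrite ?andbF //= -(modn_dvdm _ (isT : (2 %| 4)%N));
  case: (_ %% 4)%N (ltn_mod (\sum_(x in S) val x) 4) => [|[|[|[|]]]] //;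
  by case: r lt_r2 => [|[|]].
Qed.

Lemma card_subsets_summod4_add2 n r : (r < 2)%N ->
  card_subsets_summod (n * 4) 4 4 (r + 2)%N =
  (card_subsets_summod (n * 4) 4 4 r + (r == 0%N) * n)%N.
Proof.
move=> lt_r2; have lt_r4 : (r < 4)%N by apply: ltn_trans lt_r2 _.
have lt_r24 : (r + 2 < 4)%N by rewrite -[4%N]/(2 + 2)%N ltn_add2r.
have sum4 : \sum_(i : 'I_4) i = 2 by apply: val_inj; rewrite val_Zp_sum_ord.
rewrite -[(r + 2)%N]/(val (Ordinal lt_r24)) -[r in RHS]/(val (Ordinal lt_r4)).
rewrite !card_subsets_summod_grid !card_grid_sum_split.
have -> : Ordinal lt_r24 = Ordinal lt_r4 + 2 by apply: val_inj; rewrite /= modn_small.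
rewrite card_partial_sum_shift => [|c]; last first.
  rewrite card_ord; case: c => [|[|[|[|c]]]] // _;
    [exists 2 | exists 1 | exists 2]; exact/val_inj.
rewrite -addnA; congr (_ + _)%N.
have k4 : 4%N = (1 * #|'I_4|)%N by rewrite card_ord.
rewrite !(card_full_sum_eq _ _ k4) card_ord bin1 sum4.
by case: r lt_r2 lt_r4 lt_r24 => [|[|]].
Qed.

Lemma card_subsets_summod4_01 n : (0 < n)%N ->
  let C3 : rat := 'C((n * 4).-1, 3)%:R in
  (card_subsets_summod (n * 4) 4 4 0)%:R = n%:R * (C3 + 2 * n%:R - 3) / 4 /\
  (card_subsets_summod (n * 4) 4 4 1)%:R = n%:R * (C3 - 2 * n%:R + 1) / 4.
Proof.
move=> n_gt0 C3.
have B2E r : (r < 2)%N -> (2 * card_subsets_summod (n * 4) 4 2 r + 'C(n * 2, 2) =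
    'C(n * 4, 4) + 2 * ((r == 0%N) * 'C(n * 2, 2)))%N.
  move=> lt_r2; have dvd_2R : (2 %| n * 4)%N by rewrite dvdn_mull.
  have := card_subsets_summod_prime (m := 2) (isT : prime 2) dvd_2R erefl lt_r2.
  rewrite (_ : n * 4 %/ 2 = n * 2)%N; last by rewrite (_ : n * 4 = n * 2 * 2)%N ?mulnK // -mulnA.
  by case: r lt_r2 => [|[|]].
have C4 : 'C(n * 4, 4) = (n * 'C((n * 4).-1, 3))%N.
  by apply/eqP; rewrite -(eqn_pmul2l (isT : (0 < 4)%N)) -mul_bin_diag; apply/eqP; ring.
have C2 : 'C(n * 2, 2) = (n * (n * 2).-1)%N.
  by apply/eqP; rewrite -(eqn_pmul2l (isT : (0 < 2)%N)) -mul_bin_diag bin1; apply/eqP; ring.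
have toQ := congr1 (fun x : nat => x%:R : rat).
move: (B2E 0%N isT) (B2E 1%N isT).
rewrite !card_subsets_summod2E // !card_subsets_summod4_add2 // C4 C2 /=.
move/toQ => E0 /toQ E1; rewrite /= !(natrD, natrM) -/C3 /= in E0 E1.
have p_eq : (n * 2).-1%:R = 2 * n%:R - 1 :> rat.
  by rewrite -subn1 natrB ?muln_gt0 ?n_gt0 // natrM mulrC.
rewrite p_eq in E0 E1; split; lra.
Qed.

Lemma Pplus_gcd4 n lam : (0 < n)%N ->
  (Pplus (n * 4) 4 lam)%:R = ('C((n * 4).-1, 3))%:R / 4 +
    (if (lam %% 4 == 0)%N then (2 * n%:R - 3) / 4
     else if (lam %% 2 == 1)%N then (1 - 2 * n%:R) / 4 else (2 * n%:R + 1) / 4) :> rat.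
Proof.
move=> n_gt0; have [B0 B1] := card_subsets_summod4_01 n_gt0.
have nz_n : n%:R != 0 :> rat by rewrite pnatr_eq0 -lt0n.
have nP : (n * Pplus (n * 4) 4 lam)%N = card_subsets_summod (n * 4) 4 4 (lam %% 4).
  have := card_subsets_summod_gcd 4%N lam (_ : 0 < n * 4)%N.
  by rewrite gcdnMl mulnK // => <- //; rewrite muln_gt0 n_gt0.
have -> : (Pplus (n * 4) 4 lam)%:R = (card_subsets_summod (n * 4) 4 4 (lam %% 4))%:R / n%:R :> rat.
  by rewrite -nP natrM mulrC mulKf.
rewrite -(modn_dvdm lam (isT : (2 %| 4)%N)).
case: (lam %% 4)%N (ltn_mod lam 4) => [|[|[|[|]]]] // _ /=.
- by rewrite B0; field.
- by rewrite B1; field.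
- by rewrite (card_subsets_summod4_add2 n (isT : 0 < 2)%N) mul1n natrD B0; field.
- by rewrite (card_subsets_summod4_add2 n (isT : 1 < 2)%N) addn0 B1; field.
Qed.

Lemma Pplus_d5 q lam : (q %% 3 = 1)%N -> (7 <= q)%N ->
  (Pplus q.-1 3 lam)%:R =
  (if (lam %% 3 == 0)%N then ('C(q - 2, 2)%:R - 1) / 3 + 1 else ('C(q - 2, 2)%:R - 1) / 3)
  :> rat.
Proof.
move=> q3 q7; rewrite (@Pplus_prime_gcd _ _ 3 1) //=; last 2 first.
- lia.
- by apply/gcdn_idPl; lia.
rewrite bin0 subn2 (_ : 'C(3, 2) * 1 %% 3 = 0)%N // eq_sym.
by case: (_ == _) => /=; field.
Qed.

Lemma Pplus_d6_q3mod4 q lam : (q %% 4 = 3)%N -> (7 <= q)%N ->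
  (Pplus q.-1 4 lam)%:R =
  (if (lam %% 2 == 0)%N then ('C(q - 2, 3)%:R + (q%:R - 3) / 2) / 4
   else ('C(q - 2, 3)%:R - (q%:R - 3) / 2) / 4) :> rat.
Proof.
move=> q4 q7; rewrite (@Pplus_prime_gcd _ _ 2 2) //=; last 2 first.
- lia.
- by rewrite -gcdn_modr (_ : q.-1 %% 4 = 2)%N //; lia.
rewrite bin1 subn2 (_ : 'C(2, 2) * 2 %% 2 = 0)%N // eq_sym.
have -> : (q.-1 %/ 2).-1%:R = (q%:R - 3) / 2 :> rat.
  rewrite -[q in RHS](_ : (2 * (q.-1 %/ 2).-1 + 3 = q)%N); last by lia.
  by rewrite natrD natrM; field.
by case: (_ == _) => /=; field.
Qed.

Lemma Pplus_d7 q lam : (q %% 5 = 1)%N -> (11 <= q)%N ->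
  (Pplus q.-1 5 lam)%:R =
  (if (lam %% 5 == 0)%N then ('C(q - 2, 4)%:R - 1) / 5 + 1 else ('C(q - 2, 4)%:R - 1) / 5)
  :> rat.
Proof.
move=> q5 q11; rewrite (@Pplus_prime_gcd _ _ 5 1) //=; last 2 first.
- lia.
- by apply/gcdn_idPl; lia.
rewrite bin0 subn2 (_ : 'C(5, 2) * 1 %% 5 = 0)%N // eq_sym.
by case: (_ == _) => /=; field.
Qed.

Lemma Pplus_d8_qodd q lam : ((q %% 6 = 3)%N \/ (q %% 6 = 5)%N) -> (9 <= q)%N ->
  (Pplus q.-1 6 lam)%:R =
  (if (lam %% 2 == 0)%N then ('C(q - 2, 5)%:R - ('C((q - 3) %/ 2, 2))%:R) / 6
   else ('C(q - 2, 5)%:R + ('C((q - 3) %/ 2, 2))%:R) / 6) :> rat.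
Proof.
move=> q6 q9; rewrite (@Pplus_prime_gcd _ _ 2 3) //=; last 2 first.
- lia.
- by rewrite -gcdn_modr; have [->|->] : (q.-1 %% 6 = 2 \/ q.-1 %% 6 = 4)%N by lia.
rewrite subn2 (_ : 'C(2, 2) * 3 %% 2 = 1)%N // (_ : (q.-1 %/ 2).-1 = (q - 3) %/ 2)%N; last by lia.
have -> : (1 == lam %% 2)%N = ~~ (lam %% 2 == 0)%N by rewrite modn2; case: odd.
by case: (_ == _) => /=; field.
Qed.

Lemma Pplus_d8_q4mod6 q lam : (q %% 6 = 4)%N -> (10 <= q)%N ->
  (Pplus q.-1 6 lam)%:R =
  (if (lam %% 3 == 0)%N then ('C(q - 2, 5)%:R / 2 + (q%:R - 4) / 3) / 3
   else ('C(q - 2, 5)%:R - (q%:R - 4) / 3) / 6) :> rat.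
Proof.
move=> q6 q10; rewrite (@Pplus_prime_gcd _ _ 3 2) //=; last 2 first.
- lia.
- by rewrite -gcdn_modr (_ : q.-1 %% 6 = 3)%N //; lia.
rewrite bin1 subn2 (_ : 'C(3, 2) * 2 %% 3 = 0)%N // eq_sym.
have -> : (q.-1 %/ 3).-1%:R = (q%:R - 4) / 3 :> rat.
  rewrite -[q in RHS](_ : (3 * (q.-1 %/ 3).-1 + 4 = q)%N); last by lia.
  by rewrite natrD natrM; field.
by case: (_ == _) => /=; field.
Qed.

Lemma Pplus_d9 q lam : (q %% 7 = 1)%N -> (29 <= q)%N ->
  (Pplus q.-1 7 lam)%:R =
  (if (lam %% 7 == 0)%N then ('C(q - 2, 6)%:R - 1) / 7 + 1 else ('C(q - 2, 6)%:R - 1) / 7)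
  :> rat.
Proof.
move=> q7 q29; rewrite (@Pplus_prime_gcd _ _ 7 1) //=; last 2 first.
- lia.
- by apply/gcdn_idPl; lia.
rewrite bin0 subn2 (_ : 'C(7, 2) * 1 %% 7 = 0)%N // eq_sym.
by case: (_ == _) => /=; field.
Qed.

Lemma Pplus_d10 q lam : (q %% 4 = 3)%N -> (11 <= q)%N ->
  (Pplus q.-1 8 lam)%:R =
  (if (lam %% 2 == 0)%N then ('C(q - 2, 7)%:R + ('C((q - 3) %/ 2, 3))%:R) / 8
   else ('C(q - 2, 7)%:R - ('C((q - 3) %/ 2, 3))%:R) / 8) :> rat.
Proof.
move=> q4 q11; rewrite (@Pplus_prime_gcd _ _ 2 4) //=; last 2 first.
- lia.
- by rewrite -gcdn_modr; have [->|->] : (q.-1 %% 8 = 2 \/ q.-1 %% 8 = 6)%N by lia.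
rewrite subn2 (_ : 'C(2, 2) * 4 %% 2 = 0)%N // (_ : (q.-1 %/ 2).-1 = (q - 3) %/ 2)%N; last by lia.
by rewrite eq_sym; case: (_ == _) => /=; field.
Qed.

Lemma Pplus_d11 q lam : ((q %% 9 = 4)%N \/ (q %% 9 = 7)%N) -> (13 <= q)%N ->
  (Pplus q.-1 9 lam)%:R =
  (if (lam %% 3 == 0)%N then ('C(q - 2, 8)%:R + 2 * ('C((q - 4) %/ 3, 2))%:R) / 9
   else ('C(q - 2, 8)%:R - ('C((q - 4) %/ 3, 2))%:R) / 9) :> rat.
Proof.
move=> q9 q13; rewrite (@Pplus_prime_gcd _ _ 3 3) //=; last 2 first.
- lia.
- by rewrite -gcdn_modr; have [->|->] : (q.-1 %% 9 = 3 \/ q.-1 %% 9 = 6)%N by lia.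
rewrite subn2 (_ : 'C(3, 2) * 3 %% 3 = 0)%N // (_ : (q.-1 %/ 3).-1 = (q - 4) %/ 3)%N; last by lia.
by rewrite eq_sym; case: (_ == _) => /=; field.
Qed.

Lemma Pplus_d6_q1mod4 q lam : (q %% 4 = 1)%N -> (9 <= q)%N ->
  (Pplus q.-1 4 lam)%:R =
  (if (lam %% 4 == 0)%N then ('C(q - 2, 3)%:R + (q%:R - 7) / 2) / 4
   else if (lam %% 2 == 1)%N then ('C(q - 2, 3)%:R - (q%:R - 3) / 2) / 4
   else ('C(q - 2, 3)%:R + (q%:R + 1) / 2) / 4) :> rat.
Proof.
move=> q4 q9; set n := (q.-1 %/ 4)%N.
have -> : q.-1 = (n * 4)%N by rewrite /n; lia.
rewrite Pplus_gcd4; last by rewrite /n; lia.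
rewrite (_ : (n * 4).-1 = q - 2)%N; last by rewrite /n; lia.
have defq : q = (4 * n + 1)%N by rewrite /n; lia.
have -> : q%:R = 4 * n%:R + 1 :> rat by rewrite [in LHS]defq natrD natrM.
by case: ifP => _; [|case: ifP => _]; field.
Qed.

Unset Implicit Arguments.

Theorem theorem5p2 (F : finFieldType) (d : nat)
  (j1 j2 : option F) (g1 g2 beta : F) (lam : nat) :
  let q := #|F| in
  (5 <= d)%N ->
  j1 != j2 -> g1 != 0 -> g2 != 0 ->
  coset_weight d (v2 j1 j2 g1 g2) 2 ->
  (q.-1).-primitive_root beta ->
  beta ^+ lam = - g2 / g1 ->
  let P : rat := (Pplus q.-1 (d - 2) lam)%:R in
  let C k : rat := ('C(q - 2, k))%:R in
  let qQ : rat := q%:R in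
  (* (1) *)
  ((q %% 3 = 1)%N -> (7 <= q)%N -> d = 5%N ->
     P = (if (lam %% 3 == 0)%N then (C 2%N - 1) / 3 + 1 else (C 2%N - 1) / 3)) /\
  (* (2) *)
  ((q %% 4 = 3)%N -> (7 <= q)%N -> d = 6%N ->
     P = (if (lam %% 2 == 0)%N then (C 3%N + (qQ - 3) / 2) / 4
          else (C 3%N - (qQ - 3) / 2) / 4)) /\
  (* (3) *)
  ((q %% 5 = 1)%N -> (11 <= q)%N -> d = 7%N ->
     P = (if (lam %% 5 == 0)%N then (C 4%N - 1) / 5 + 1 else (C 4%N - 1) / 5)) /\
  (* (4) *)
  (((q %% 6 = 3)%N \/ (q %% 6 = 5)%N) -> (9 <= q)%N -> d = 8%N ->
     P = (if (lam %% 2 == 0)%N then (C 5%N - ('C((q - 3) %/ 2, 2))%:R) / 6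
          else (C 5%N + ('C((q - 3) %/ 2, 2))%:R) / 6)) /\
  (* (5) *)
  ((q %% 6 = 4)%N -> (10 <= q)%N -> d = 8%N ->
     P = (if (lam %% 3 == 0)%N then (C 5%N / 2 + (qQ - 4) / 3) / 3
          else (C 5%N - (qQ - 4) / 3) / 6)) /\
  (* (6) *)
  ((q %% 7 = 1)%N -> (29 <= q)%N -> d = 9%N ->
     P = (if (lam %% 7 == 0)%N then (C 6%N - 1) / 7 + 1 else (C 6%N - 1) / 7)) /\
  (* (7) *)
  ((q %% 4 = 3)%N -> (11 <= q)%N -> d = 10%N ->
     P = (if (lam %% 2 == 0)%N then (C 7%N + ('C((q - 3) %/ 2, 3))%:R) / 8
          else (C 7%N - ('C((q - 3) %/ 2, 3))%:R) / 8)) /\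
  (* (8) *)
  (((q %% 9 = 4)%N \/ (q %% 9 = 7)%N) -> (13 <= q)%N -> d = 11%N ->
     P = (if (lam %% 3 == 0)%N then (C 8%N + 2 * ('C((q - 4) %/ 3, 2))%:R) / 9
          else (C 8%N - ('C((q - 4) %/ 3, 2))%:R) / 9)) /\
  (* (9) *)
  ((q %% 4 = 1)%N -> (9 <= q)%N -> d = 6%N ->
     P = (if (lam %% 4 == 0)%N then (C 3%N + (qQ - 7) / 2) / 4
          else if (lam %% 2 == 1)%N then (C 3%N - (qQ - 3) / 2) / 4
          else (C 3%N + (qQ + 1) / 2) / 4)).
Proof.
move=> q _ _ _ _ _ _ _ P C qQ.
do !split; move=> hq hq' hd; subst d.
- exact: Pplus_d5.
- exact: Pplus_d6_q3mod4.
- exact: Pplus_d7.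
- exact: Pplus_d8_qodd.
- exact: Pplus_d8_q4mod6.
- exact: Pplus_d9.
- exact: Pplus_d10.
- exact: Pplus_d11.
- exact: Pplus_d6_q1mod4.
Qed.
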